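(* Let $X$ be a connected, non-bipartite strongly regular graph with parameters $(n,k,a,c)$ (every vertex has degree $k$, any two adjacent vertices have exactly $a$ common neighbours, any two distinct non-adjacent vertices have exactly $c$ common neighbours), where $k\ge 3$ and $k>c\ge 1$. Assume that $s^2=(a-c)^2+4(k-c)$ for some positive integer $s$, so that the eigenvalues of the adjacency matrix other than $k$ are the integers $\lambda_1=\frac{a-c+s}{2}=:e$ and $\lambda_2=\frac{a-c-s}{2}$ (so $e\ge 1$, $k=(e+1)c+e(e-a)$ and $\lambda_2=a-c-e$). Suppose the Krein parameter $$K_2=(k+\lambda_2)(\lambda_1+1)^2-(\lambda_2+1)(k+\lambda_2+2\lambda_1\lambda_2)$$ satisfies $K_2\ge 0$. Then $$c\le\begin{cases} e^2+e+2a & \text{if } e\ge 3,\\ e^2+e+3a & \text{if } e=1 \text{ or } e=2.\end{cases}$$ In particular, when $a=0$ we have $c\le e(e+1)$.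
   Context: The condition $K_2\ge 0$ is one of the Krein conditions. Expressed in terms of $a,c,e$, one has $K_2=P+Qc-ec^2$ with $P=(e+1)(e-a)(e^2-e+a)$ and $Q=e^3+(2a+1)e+a$. *)

From mathcomp Require Import all_boot all_order all_algebra.
Set Implicit Arguments. Unset Strict Implicit. Unset Printing Implicit Defensive.
Import Order.TTheory GRing.Theory Num.Theory.

(* Strongly regular with parameters (k, a, c) (the number of vertices n = #|T|
   is stated separately). *)
Definition srg (T : finType) (E : rel T) (k a c : nat) : Prop :=
  [/\ symmetric E, irreflexive E,
      (forall x : T, #|[set y | E x y]| = k),
      (forall x y : T, x != y -> E x y -> #|[set z | E x z && E y z]| = a) &
      (forall x y : T, x != y -> ~~ E x y -> #|[set z | E x z && E y z]| = c)].

Definition graph_connected (T : finType) (E : rel T) : Prop :=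
  forall x y : T, connect E x y.

Definition bipartite (T : finType) (E : rel T) : Prop :=
  exists f : T -> bool, forall x y : T, E x y -> f x != f y.

Definition krein2 (k e l2 : int) : int :=
  (k + l2) * (e + 1) ^+ 2 - (l2 + 1) * (k + l2 + 2 * e * l2).

From mathcomp Require Import all_boot all_order all_algebra.
From mathcomp Require Import ring lra zify.
Set Implicit Arguments. Unset Strict Implicit. Unset Printing Implicit Defensive.
Import Order.TTheory GRing.Theory Num.Theory.
Local Open Scope ring_scope.

(** Eliminating [s] gives [k = (e+1)c + e(e-a)], and then
    [K_2 = P + Q c - e c^2] is a concave quadratic in [c].  At the threshold
    [c0 = e^2 + e + 2a + 1] (resp. [3a + 3] when [e = 1]) its value is
    negative and it is already decreasing there, so [K_2 >= 0] forces
    [c < c0]. *)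

Section KreinQuadratic.
Variable R : realDomainType.
Implicit Types e a c s k P Q : R.

Definition krein_quad e a c : R :=
  (e + 1) * (e - a) * (e ^+ 2 - e + a) + (e ^+ 3 + (2 * a + 1) * e + a) * c
  - e * c ^+ 2.

Lemma srg_valency k a c s e :
  s ^+ 2 = (a - c) ^+ 2 + 4 * (k - c) -> 2 * e = a - c + s ->
  k = (e + 1) * c + e * (e - a).
Proof.
move=> sq_s def_e.
have s_eq : s = 2 * e - a + c by rewrite def_e; ring.
have four_k : 4 * k = 4 * ((e + 1) * c + e * (e - a)).
  by move: sq_s; rewrite s_eq => ?; lra.
by apply: (mulfI _ four_k); rewrite pnatr_eq0.
Qed.

(* [s^2 > (a - c)^2] makes [s > |a - c|], so [2e = a - c + s > 0]. *)
Lemma srg_eigenvalue_gt0 k a c s e :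
  0 <= s -> c < k ->
  s ^+ 2 = (a - c) ^+ 2 + 4 * (k - c) -> 2 * e = a - c + s -> 0 < e.
Proof. by move=> s_ge0 lt_ck sq_s def_e; nra. Qed.

Lemma concave_quadratic_le P Q e (c0 : R) c :
  0 <= e -> Q <= 2 * e * c0 -> c0 <= c ->
  P + Q * c - e * c ^+ 2 <= P + Q * c0 - e * c0 ^+ 2.
Proof.
move=> e_ge0 Q_le le_c0c.
have -> : P + Q * c - e * c ^+ 2
          = P + Q * c0 - e * c0 ^+ 2 + (c - c0) * (Q - e * (c + c0)) by ring.
rewrite gerDl mulr_ge0_le0 ?subr_ge0 //; nra.
Qed.

Lemma krein_quad_threshold_2a e a :
  2 <= e -> 0 <= a -> krein_quad e a (e ^+ 2 + e + 2 * a + 1) < 0.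
Proof.
move=> e_ge2 a_ge0.
have -> : krein_quad e a (e ^+ 2 + e + 2 * a + 1)
          = - (e ^+ 3 + 2 * e ^+ 2 + (e - 1) * a ^+ 2 + (e ^+ 3 - 3 * e - 1) * a).
  by rewrite /krein_quad; ring.
have e3_ge : 3 * e + 1 <= e ^+ 3.
  have e2_ge : 4 <= e ^+ 2 by nra.
  have : 4 * e <= e ^+ 2 * e by rewrite ler_wpM2r //; lra.
  by rewrite -exprSr; lra.
have a2_term : 0 <= (e - 1) * a ^+ 2 by rewrite mulr_ge0 ?sqr_ge0 ?subr_ge0 //; lra.
have a_term : 0 <= (e ^+ 3 - 3 * e - 1) * a by rewrite mulr_ge0 //; lra.
by rewrite oppr_lt0; have := sqr_ge0 e; lra.
Qed.

Lemma krein_quad_threshold_e1 a :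
  0 <= a -> krein_quad 1 a (3 * a + 3) < 0.
Proof. by move=> a_ge0; rewrite /krein_quad; nra. Qed.

Lemma krein_quad_lt0_2a e a c :
  2 <= e -> 0 <= a -> e ^+ 2 + e + 2 * a + 1 <= c -> krein_quad e a c < 0.
Proof.
move=> e_ge2 a_ge0 le_c0c.
apply: le_lt_trans (krein_quad_threshold_2a e_ge2 a_ge0).
by apply: concave_quadratic_le le_c0c; nra.
Qed.

Lemma krein_quad_lt0_e1 a c :
  0 <= a -> 3 * a + 3 <= c -> krein_quad 1 a c < 0.
Proof.
move=> a_ge0 le_c0c.
apply: le_lt_trans (krein_quad_threshold_e1 a_ge0).
by apply: concave_quadratic_le le_c0c; lra.
Qed.

End KreinQuadratic.

Lemma krein2_srgE (e a c : int) :
  krein2 ((e + 1) * c + e * (e - a)) e (a - c - e) = krein_quad e a c.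
Proof. by rewrite /krein2 /krein_quad; ring. Qed.

Theorem theorem2p1 (T : finType) (E : rel T) (n k a c s : nat) (e : int) :
  #|T| = n ->
  srg E k a c ->
  graph_connected E ->
  ~ bipartite E ->
  (3 <= k)%N -> (c < k)%N -> (1 <= c)%N ->
  (0 < s)%N ->
  (s%:Z) ^+ 2 = (a%:Z - c%:Z) ^+ 2 + 4 * (k%:Z - c%:Z) ->
  2 * e = a%:Z - c%:Z + s%:Z ->
  0 <= krein2 k%:Z e (a%:Z - c%:Z - e) ->
  [/\ (3 <= e -> c%:Z <= e ^+ 2 + e + 2 * a%:Z),
      (e = 1 \/ e = 2 -> c%:Z <= e ^+ 2 + e + 3 * a%:Z) &
      (a = 0%N -> c%:Z <= e * (e + 1))].
Proof.
move=> _ _ _ _ _ lt_ck _ _ sq_s def_e krein_ge0.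
have e_gt0 : 0 < e.
  by apply: srg_eigenvalue_gt0 sq_s def_e; rewrite ?ltz_nat.
rewrite (srg_valency sq_s def_e) krein2_srgE in krein_ge0.
have a_ge0 : 0 <= a%:Z by [].
have bound_2a : 2 <= e -> c%:Z <= e ^+ 2 + e + 2 * a%:Z.
  move=> e_ge2; rewrite leNgt -lezD1; apply/negP => /(krein_quad_lt0_2a e_ge2 a_ge0).
  by rewrite ltNge krein_ge0.
have bound_e1 : e = 1 -> c%:Z <= 3 * a%:Z + 2.
  move=> e1; rewrite leNgt -lezD1 -addrA; apply/negP.
  by move/(krein_quad_lt0_e1 a_ge0); rewrite -e1 ltNge krein_ge0.
have [e1 | e_ge2] : e = 1 \/ 2 <= e by lia.
  by split=> [|_|a0]; [lia | rewrite e1; lra | move: (bound_e1 e1); rewrite e1 a0; lra].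
by split=> [e_ge3 | _ | a0]; move: (bound_2a e_ge2); [lia | nra | rewrite a0; lra].
Qed.
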